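(* The forcing $\mathbb{T}$ is not c.c.c.: letting $E\subseteq\omega$ be the even numbers and $O=\omega\setminus E$, and for each $a\subseteq O$ letting $p_a:=\{t\in 3^{<\omega}: \forall n\in O\cap|t|\,((n\in a\rightarrow t(n)=1)\wedge(n\notin a\rightarrow t(n)=0))\}$, the family $\{p_a: a\subseteq O\}$ consists of conditions of $\mathbb{T}$ and is an antichain of size $2^{\aleph_0}$.
   Context: $\mathbb{T}$ is the tree-forcing (ordered by inclusion) consisting of perfect trees $p\subseteq 3^{<\omega}$ together with a set $A_p\subseteq\omega$ (the splitting levels of $p$) such that: for every $t\in p$, $|t|\in A_p$ iff $t$ is a splitting node of $p$; every splitting node $t$ is fully splitting (i.e. $t^\frown i\in p$ for every $i\in 3$); for every $s\supseteq \mathrm{stem}(p)$ which is not splitting, $s^\frown 2\notin p$; and for all non-splitting $s,t\in p$ with $|s|=|t|$ and all $i\in 2$, $s^\frown i\in p\Leftrightarrow t^\frown i\in p$. Here $s^\frown i$ denotes the sequence $s$ extended by the value $i$, and $\mathrm{stem}(p)$ is the longest node of $p$ comparable with every node of $p$. *)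

From mathcomp Require Import all_boot.
Set Implicit Arguments. Unset Strict Implicit. Unset Printing Implicit Defensive.

Definition node := seq 'I_3.
Definition tree3 := node -> Prop.

Definition i0 : 'I_3 := @Ordinal 3 0 isT.
Definition i1 : 'I_3 := @Ordinal 3 1 isT.
Definition i2 : 'I_3 := @Ordinal 3 2 isT.

Definition is_tree (p : tree3) : Prop :=
  (exists t, p t) /\ forall s t, p t -> prefix s t -> p s.

Definition splitting (p : tree3) (t : node) : Prop :=
  p t /\ exists i j : 'I_3, i <> j /\ p (rcons t i) /\ p (rcons t j).

Definition perfect (p : tree3) : Prop :=
  is_tree p /\ forall t, p t -> exists s, prefix t s /\ splitting p s.

Definition comparable (s t : node) : Prop := prefix s t \/ prefix t s.

Definition is_stem (p : tree3) (s : node) : Prop :=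
  p s /\ (forall t, p t -> comparable s t) /\
  (forall s', p s' -> (forall t, p t -> comparable s' t) -> size s' <= size s).

Definition T_cond (p : tree3) : Prop :=
  perfect p /\
  exists A : nat -> Prop,
    (forall t, p t -> (A (size t) <-> splitting p t)) /\
    (forall t, splitting p t -> forall i : 'I_3, p (rcons t i)) /\
    (forall st, is_stem p st -> forall s, p s -> prefix st s ->
        ~ splitting p s -> ~ p (rcons s i2)) /\
    (forall s t, p s -> p t -> ~ splitting p s -> ~ splitting p t ->
        size s = size t -> forall i : 'I_3, i != i2 ->
        (p (rcons s i) <-> p (rcons t i))).

Definition subtree (q p : tree3) : Prop := forall t, q t -> p t.

Definition T_incompatible (p q : tree3) : Prop :=
  ~ exists r, T_cond r /\ subtree r p /\ subtree r q.

Definition countable_family (F : tree3 -> Prop) : Prop :=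
  exists f : nat -> tree3, forall p, F p -> exists n, f n = p.

Definition T_not_ccc : Prop :=
  exists F : tree3 -> Prop,
    (forall p, F p -> T_cond p) /\
    (forall p q, F p -> F q -> p <> q -> T_incompatible p q) /\
    ~ countable_family F.

Definition subset_odd (a : nat -> bool) : Prop := forall n, a n -> odd n.

Definition p_of (a : nat -> bool) : tree3 := fun t =>
  forall n, odd n -> n < size t ->
    (a n -> nat_of_ord (nth i0 t n) = 1) /\ (~~ a n -> nat_of_ord (nth i0 t n) = 0).

(* The tree p_a fixes the digit of every node at each odd level according to a
   and branches fully at every even level, so it is a condition of T with the
   even numbers as splitting levels.  Any perfect tree below both p_a and p_b
   has nodes of every length, which read off a and b at all odd levels; hence
   p_a and p_b are compatible only when a = b.  Finally a diagonal argument on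
   the odd levels 2k+1 shows that no sequence lists all the p_a. *)
From Stdlib Require Import ClassicalEpsilon FunctionalExtensionality.
From mathcomp Require Import all_boot.

Set Implicit Arguments.
Unset Strict Implicit.
Unset Printing Implicit Defensive.

Lemma p_ofP a t :
  p_of a t <-> forall n, odd n -> n < size t -> nat_of_ord (nth i0 t n) = a n.
Proof.
split=> H n odd_n lt_n; have := H n odd_n lt_n.
- by case: (a n) => [[->]|[_ ->]].
- by case: (a n) => ->.
Qed.

Lemma p_of_rcons a t i :
  p_of a (rcons t i) <-> p_of a t /\ (odd (size t) -> nat_of_ord i = a (size t)).
Proof.
rewrite !p_ofP; split=> [H | [Ht Hi] n odd_n].
- split=> [n odd_n lt_n | odd_t].
  + by have := H n odd_n; rewrite size_rcons nth_rcons lt_n; apply; apply: leqW.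
  + by have := H _ odd_t; rewrite size_rcons nth_rcons ltnn eqxx; apply.
- rewrite size_rcons ltnS leq_eqVlt nth_rcons => /orP[/eqP eq_n | lt_n].
  + by rewrite eq_n ltnn eqxx; apply: Hi; rewrite -eq_n.
  + by rewrite lt_n; apply: Ht.
Qed.

Lemma p_of_prefix a s t : p_of a t -> prefix s t -> p_of a s.
Proof.
move=> /p_ofP Ht /prefixP[u eq_t]; apply/p_ofP => n odd_n lt_n.
have := Ht n odd_n; rewrite eq_t size_cat nth_cat lt_n; apply.
exact: leq_trans lt_n (leq_addr _ _).
Qed.

Lemma splitting_p_of a t : splitting (p_of a) t <-> p_of a t /\ ~~ odd (size t).
Proof.
split=> [[Ht [i [j [neq_ij [/p_of_rcons[_ Hi] /p_of_rcons[_ Hj]]]]]] | [Ht even_t]].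
- split=> //; apply/negP => odd_t; apply: neq_ij; apply: val_inj.
  by rewrite /= Hi // Hj.
- split=> //; exists i0, i1; split=> //.
  by split; apply/p_of_rcons; rewrite (negbTE even_t).
Qed.

Lemma perfect_p_of a : perfect (p_of a).
Proof.
split; first by split; [exists [::] | move=> s t; apply: p_of_prefix].
move=> t Ht; case odd_t: (odd (size t)); last first.
  by exists t; split; [exact: prefix_refl | apply/splitting_p_of; rewrite odd_t].
exists (rcons t (if a (size t) then i1 else i0)); split; first exact: prefix_rcons.
apply/splitting_p_of; rewrite size_rcons /= odd_t; split=> //.
by apply/p_of_rcons; split=> // _; case: (a _).
Qed.

Lemma T_cond_p_of a : T_cond (p_of a).
Proof.
split; first exact: perfect_p_of.
exists (fun n => ~~ odd n); split; [|split; [|split]].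
- by move=> t Ht; split=> [even_t | /splitting_p_of[]]; first exact/splitting_p_of.
- by move=> t /splitting_p_of[Ht even_t] i; apply/p_of_rcons; rewrite (negbTE even_t).
- move=> _ _ s Hs _ not_split /p_of_rcons[_ Hi2].
  case odd_s: (odd (size s)); last by apply: not_split; apply/splitting_p_of; rewrite odd_s.
  by have := Hi2 odd_s; case: (a _).
- move=> s t Hs Ht not_split_s _ eq_size i _.
  have odd_s : odd (size s).
    by apply/negPn/negP => even_s; apply: not_split_s; apply/splitting_p_of.
  rewrite !p_of_rcons -eq_size.
  by split=> [[_ Hi] | [_ Hi]]; split.
Qed.

Lemma perfect_long_node r : perfect r -> forall m, exists t, r t /\ m <= size t.
Proof.
move=> [[[t0 Ht0] _] Hsplit]; elim => [|m [t [Ht le_mt]]]; first by exists t0.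
have [s [le_ts [_ [i [_ [_ [Hi _]]]]]]] := Hsplit t Ht.
exists (rcons s i); split=> //; rewrite size_rcons ltnS.
exact: leq_trans le_mt (size_prefix le_ts).
Qed.

Lemma perfect_subtree_p_of_agree r a b : perfect r ->
  subtree r (p_of a) -> subtree r (p_of b) -> forall n, odd n -> a n = b n.
Proof.
move=> perfect_r sub_a sub_b n odd_n.
have [t [Ht lt_n]] := perfect_long_node perfect_r n.+1.
move/p_ofP: (sub_a t Ht) => /(_ n odd_n lt_n).
move/p_ofP: (sub_b t Ht) => /(_ n odd_n lt_n) ->.
by case: (a n); case: (b n).
Qed.

Lemma p_of_eq_odd a b : p_of a = p_of b -> forall n, odd n -> a n = b n.
Proof.
move=> eq_ab; apply: (perfect_subtree_p_of_agree (perfect_p_of a)) => //.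
by rewrite eq_ab.
Qed.

Lemma subset_odd_eq a b :
  subset_odd a -> subset_odd b -> (forall n, odd n -> a n = b n) -> a = b.
Proof.
move=> Ha Hb eq_odd; apply: functional_extensionality => n.
case odd_n: (odd n); first exact: eq_odd.
case an: (a n); first by have := Ha _ an; rewrite odd_n.
by case bn: (b n); first by have := Hb _ bn; rewrite odd_n.
Qed.

Lemma p_of_inj a b : subset_odd a -> subset_odd b -> p_of a = p_of b -> a = b.
Proof. by move=> Ha Hb /p_of_eq_odd; apply: subset_odd_eq. Qed.

Lemma p_of_incompatible a b : subset_odd a -> subset_odd b -> a <> b ->
  T_incompatible (p_of a) (p_of b).
Proof.
move=> Ha Hb neq_ab [r [[perfect_r _] [sub_a sub_b]]]; apply: neq_ab.
by apply: subset_odd_eq => //; apply: perfect_subtree_p_of_agree perfect_r sub_a sub_b.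
Qed.

Definition decide (P : Prop) : bool :=
  if excluded_middle_informative P then true else false.

Lemma decideP (P : Prop) : reflect P (decide P).
Proof. by rewrite /decide; case: excluded_middle_informative => H; constructor. Qed.

Lemma p_of_not_enumerable :
  ~ exists f : nat -> tree3, forall a, subset_odd a -> exists k, f k = p_of a.
Proof.
move=> [f enum_f].
pose diag n := odd n && ~~ decide (exists b, f n./2 = p_of b /\ b n).
have diag_odd : subset_odd diag by move=> n /andP[].
have [k f_k] := enum_f diag diag_odd.
have odd_n : odd k.*2.+1 by rewrite /= odd_double.
have half_n : k.*2.+1./2 = k by rewrite /= uphalf_double.
have diag_n : diag k.*2.+1 = ~~ decide (exists b, f k = p_of b /\ b k.*2.+1).
  by rewrite /diag odd_n half_n.
rewrite f_k in diag_n; move: diag_n; case: decideP => [[b [eq_db b_n]] | no_b] /= diag_n.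
- by move: b_n; rewrite -(p_of_eq_odd eq_db odd_n) diag_n.
- by apply: no_b; exists diag; rewrite diag_n.
Qed.

Theorem mainTheorem1 :
  T_not_ccc /\
  (forall a, subset_odd a -> T_cond (p_of a)) /\
  (forall a b, subset_odd a -> subset_odd b -> a <> b ->
     T_incompatible (p_of a) (p_of b)) /\
  (forall a b, subset_odd a -> subset_odd b -> p_of a = p_of b -> a = b).
Proof.
split; last first.
  split; first by move=> a _; apply: T_cond_p_of.
  by split; [exact: p_of_incompatible | exact: p_of_inj].
exists (fun p => exists a, subset_odd a /\ p = p_of a); split; [|split].
- by move=> _ [a [_ ->]]; apply: T_cond_p_of.
- move=> _ _ [a [Ha ->]] [b [Hb ->]] neq_p.
  by apply: p_of_incompatible => // eq_ab; apply: neq_p; rewrite eq_ab.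
- move=> [f enum_f]; apply: p_of_not_enumerable; exists f => a Ha.
  by apply: enum_f; exists a.
Qed.
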